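(* Let $X$ be a Banach lattice with order continuous norm, and let $S$ be a convex $C_0$-semigroup on $X$ with generator $A\colon D(A)\subset X\to X$. Then $A$ is closed: for every sequence $(x_n)_{n\in\mathbb N}$ in $D(A)$ with $x_n\to x\in X$ and $Ax_n\to y\in X$, it holds $x\in D(A)$ and $Ax=y$.
   Context: A Banach lattice $X$ has order continuous norm if $\|x_\alpha\|\to 0$ for every net $x_\alpha\downarrow 0$. An operator $T\colon X\to X$ is convex if $T(\lambda x+(1-\lambda)y)\le \lambda Tx+(1-\lambda)Ty$ for all $x,y$, $\lambda\in[0,1]$, and bounded if $\sup_{\|x\|\le r}\|Tx\|<\infty$ for all $r>0$. A convex $C_0$-semigroup is a family $(S(t))_{t\ge0}$ of bounded convex operators $X\to X$ with $S(0)=\mathrm{id}$, $S(t+s)=S(t)S(s)$ for all $s,t\ge0$, and $S(t)x\to x$ as $t\downarrow 0$ for all $x$. Its generator is $Ax:=\lim_{h\downarrow 0}\frac{S(h)x-x}{h}$ with domain $D(A)$ the set of $x$ for which this norm limit exists. *)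

From HB Require Import structures.
From mathcomp Require Import all_boot all_order all_algebra.
From mathcomp Require Import all_classical all_reals all_analysis.
Set Implicit Arguments. Unset Strict Implicit. Unset Printing Implicit Defensive.
Import Order.TTheory GRing.Theory Num.Theory.
Import numFieldNormedType.Exports.
Local Open Scope classical_set_scope.
Local Open Scope ring_scope.

Section Defs.
Context {R : realType} {V : completeNormedModType R}.

Definition lmod (join : V -> V -> V) (x : V) : V := join x (- x).

Record BanachLattice (le : V -> V -> Prop) (join : V -> V -> V) : Prop := {
  bl_refl : forall x, le x x;
  bl_antisym : forall x y, le x y -> le y x -> x = y;
  bl_trans : forall x y z, le x y -> le y z -> le x z;
  bl_add : forall x y z, le x y -> le (x + z) (y + z);
  bl_scale : forall (a : R) x y, 0 <= a -> le x y -> le (a *: x) (a *: y);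
  bl_join_l : forall x y, le x (join x y);
  bl_join_r : forall x y, le y (join x y);
  bl_join_least : forall x y z, le x z -> le y z -> le (join x y) z;
  bl_norm : forall x y, le (lmod join x) (lmod join y) -> `|x| <= `|y|
}.

(* Order continuous norm: ||x_a|| -> 0 for every net x_a decreasing to 0
   (i.e. decreasing with infimum 0). A net is indexed by a nonempty
   directed preordered set (I, r). *)
Definition order_continuous_norm (le : V -> V -> Prop) : Prop :=
  forall (I : Type) (r : I -> I -> Prop) (x : I -> V),
    inhabited I ->
    (forall i, r i i) ->
    (forall i j k, r i j -> r j k -> r i k) ->
    (forall i j, exists k, r i k /\ r j k) ->
    (forall i j, r i j -> le (x j) (x i)) ->
    (forall i, le 0 (x i)) ->
    (forall z, (forall i, le z (x i)) -> le z 0) ->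
    forall eps : R, 0 < eps ->
      exists i0, forall i, r i0 i -> `|x i| < eps.

Definition convex_op (le : V -> V -> Prop) (T : V -> V) : Prop :=
  forall (x y : V) (l : R), 0 <= l <= 1 ->
    le (T (l *: x + (1 - l) *: y)) (l *: T x + (1 - l) *: T y).

Definition bounded_op (T : V -> V) : Prop :=
  forall r : R, 0 < r -> exists M : R, forall x : V, `|x| <= r -> `|T x| <= M.

(* S t is only relevant for t >= 0. *)
Definition convex_C0_semigroup (le : V -> V -> Prop) (S : R -> V -> V) : Prop :=
  [/\ (forall t, 0 <= t -> convex_op le (S t) /\ bounded_op (S t)),
      (forall x, S 0 x = x),
      (forall t s x, 0 <= t -> 0 <= s -> S (t + s) x = S t (S s x)) &
      (forall x, S t x @[t --> 0^'+] --> x)].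

Definition gen_domain (S : R -> V -> V) : set V :=
  [set x | cvg ((h^-1 *: (S h x - x)) @[h --> 0^'+])].

Definition generator (S : R -> V -> V) (x : V) : V :=
  lim ((h^-1 *: (S h x - x)) @[h --> 0^'+]).

End Defs.

(* Convexity turns the increments of each S(s) into order bounds: for 0 <= h <= 1,
     h (S(s)u - S(s)(u - w)) <= S(s)(u + h w) - S(s)u <= h (S(s)(u + w) - S(s)u).
   If S(h)u = u + h w with w close to Au, then S(m h)u - u is a telescoping sum of
   such increments, so the positive and negative parts of S(t)u - u - t y, and
   hence its norm, are bounded by t times the distance by which the S(s), s < t,
   move u + w, u, u - w away from x + y, x, x - y.  These distances are small
   uniformly in small s and in nearby starting points: by a Baire category
   argument the convex continuous operators S(s) are uniformly bounded near each
   point for small s, hence uniformly Lipschitz there.  Taking u = u_n and letting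
   n go to infinity, by continuity of S(t), gives |S(t)x - x - t y| <= t e for
   small t. *)

From HB Require Import structures.
From mathcomp Require Import all_boot all_order all_algebra.
From mathcomp Require Import all_classical all_reals all_analysis.
From mathcomp Require Import ring lra.
Import Order.TTheory GRing.Theory Num.Theory.
Import numFieldNormedType.Exports.
Import Num.Def.
Local Open Scope classical_set_scope.
Local Open Scope ring_scope.

Lemma norm_subB_le {K : numDomainType} {W : normedZmodType K} (a b x y : W) :
  `|a - b - y| <= `|a - (x + y)| + `|b - x|.
Proof.
rewrite -addrA -opprD; apply: le_trans (ler_distD (x + y) _ _) _.
by rewrite lerD2l opprD addrACA subrr addr0 distrC.
Qed.

Section Baire.
Context {R : realType} {V : completeNormedModType R}.

Lemma eventually_bounded_on_ball (f : nat -> V -> R) :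
  (forall n, continuous (f n)) ->
  (forall z, exists M N, forall n, (N <= n)%N -> f n z <= M) ->
  exists x0 r k, 0 < r /\
    forall n z, (k <= n)%N -> `|x0 - z| < r -> f n z <= k%:R.
Proof.
move=> fC fB.
pose O k := [set z | exists2 n, (k <= n)%N & k%:R < f n z].
have O_open k : open (O k).
  rewrite openE => z [n kn fz]; rewrite /interior.
  have /cvgrPdist_lt /(_ (f n z - k%:R)) := fC n z.
  rewrite subr_gt0 => /(_ fz); apply: filterS => w fzw.
  by exists n => //; have := ler_norm (f n z - f n w); lra.
have O_not_cover z : exists k, ~ O k z.
  have [M [N fM]] := fB z.
  exists (maxn N (truncn M).+1) => -[n]; rewrite geq_max => /andP[Nn _].
  rewrite ltNge => /negP; apply; apply: le_trans (fM n Nn) _.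
  by apply: le_trans (ltW (truncnS_gt M)) _; rewrite ler_nat leq_maxr.
have [k Ok] : exists k, ~ dense (O k).
  apply: contrapT => dense_all.
  have O_dense k : open (O k) /\ dense (O k).
    by split=> //; apply: contrapT => Ok; apply: dense_all; exists k.
  have [z [_ Oz]] := Baire O_dense (ex_intro _ 0 I) openT.
  by have [k' /(_ (Oz k' I))] := O_not_cover z.
have [U [[x0 x0U] UOk]] := denseNE Ok.
have /nbhs_ballP[r r0 ballU] := open_nbhs_nbhs x0U.
exists x0, r, k; split=> // n z kn x0z; rewrite leNgt; apply/negP => fz.
have : (U `&` O k) z by split; [apply: ballU; rewrite -ball_normE | exists n].
by rewrite UOk.
Qed.

End Baire.

Section BanachLattice.
Context {R : realType} {V : completeNormedModType R}.
Context {le : V -> V -> Prop} {join : V -> V -> V}.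
Hypothesis hBL : BanachLattice le join.

Definition pos_part (z : V) : V := join z 0.

Lemma le_addr {a b} c : le a b -> le (a + c) (b + c).
Proof. by move=> ab; exact: (bl_add hBL c ab). Qed.

Lemma le_add {a b c d} : le a b -> le c d -> le (a + c) (b + d).
Proof.
move=> ab cd; apply: (bl_trans hBL (le_addr c ab)).
by rewrite ![b + _]addrC; exact: le_addr.
Qed.

Lemma le_subl {a b c} : le a (b + c) -> le (a - b) c.
Proof. by move/(le_addr (- b)); rewrite addrAC subrr add0r. Qed.

Lemma le_opp {a b} : le a b -> le (- b) (- a).
Proof. by move/(le_addr (- a - b)); rewrite addrA subrr add0r addrC subrK. Qed.

Lemma le_oppr {a b c} : le a (b + c) -> le (- c) (b - a).
Proof.
move/(le_addr (- a - c)).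
by rewrite addrA subrr add0r addrACA subrr addr0.
Qed.

Lemma le_add_sub {a b c d} : le (a + b) (c + d) -> le (b - d) (c - a).
Proof.
move/(le_addr (- a - d)).
by rewrite addrACA subrr add0r addrACA subrr addr0.
Qed.

Lemma pos_part_ge z : le z (pos_part z).
Proof. exact: (bl_join_l hBL). Qed.

Lemma pos_part_ge0 z : le 0 (pos_part z).
Proof. exact: (bl_join_r hBL). Qed.

Lemma pos_part_le {a b} : le a b -> le (pos_part a) (pos_part b).
Proof.
move=> ab; apply: (bl_join_least hBL); last exact: pos_part_ge0.
exact: (bl_trans hBL ab (pos_part_ge b)).
Qed.

Lemma pos_part0 : pos_part 0 = 0.
Proof.
apply: (bl_antisym hBL); last exact: pos_part_ge0.
by apply: (bl_join_least hBL); exact: (bl_refl hBL).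
Qed.

Lemma pos_partD a b : le (pos_part (a + b)) (pos_part a + pos_part b).
Proof.
apply: (bl_join_least hBL); first exact: le_add (pos_part_ge a) (pos_part_ge b).
by rewrite -[0]addr0; exact: le_add (pos_part_ge0 a) (pos_part_ge0 b).
Qed.

Lemma ge0_lmod {a} : le 0 a -> lmod join a = a.
Proof.
move=> a0; apply: (bl_antisym hBL); last exact: (bl_join_l hBL).
apply: (bl_join_least hBL); first exact: (bl_refl hBL).
apply: (bl_trans hBL _ a0).
by move/(le_addr (- a)): a0; rewrite add0r subrr.
Qed.

Lemma lmod_ge0 z : le 0 (lmod join z).
Proof.
set J := lmod join z.
have JJ : le 0 (J + J).
  by rewrite -(subrr z); exact: le_add (bl_join_l hBL _ _) (bl_join_r hBL _ _).
have half_ge0 : (0 : R) <= 2^-1 by rewrite invr_ge0 ler0n.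
move: (bl_scale hBL half_ge0 JJ).
have -> : J + J = 2%:R *: J by rewrite scaler_nat mulr2n.
by rewrite scaler0 scalerA mulVf ?pnatr_eq0 // scale1r.
Qed.

Lemma ge0_le_norm {a b} : le 0 a -> le a b -> `|a| <= `|b|.
Proof.
move=> a0 ab; apply: (bl_norm hBL).
by rewrite !ge0_lmod //; exact: (bl_trans hBL a0 ab).
Qed.

Lemma norm_pos_part_le z : `|pos_part z| <= `|z|.
Proof.
apply: (bl_norm hBL); rewrite ge0_lmod; last exact: pos_part_ge0.
by apply: (bl_join_least hBL); [exact: (bl_join_l hBL) | exact: lmod_ge0].
Qed.

Lemma norm_pos_part_le_norm {a b} : le a b -> `|pos_part a| <= `|b|.
Proof.
move=> ab; apply: le_trans (norm_pos_part_le b).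
exact: ge0_le_norm (pos_part_ge0 a) (pos_part_le ab).
Qed.

Lemma norm_pos_partD a b : `|pos_part (a + b)| <= `|pos_part a| + `|pos_part b|.
Proof.
apply: le_trans (ler_normD _ _).
exact: ge0_le_norm (pos_part_ge0 _) (pos_partD a b).
Qed.

Lemma norm_pos_part_le_add {a b c} :
  le a (b + c) -> `|pos_part a| <= `|pos_part b| + `|c|.
Proof.
move=> abc; apply: le_trans (ge0_le_norm (pos_part_ge0 a) (pos_part_le abc)) _.
by apply: le_trans (norm_pos_partD b c) _; rewrite lerD2l norm_pos_part_le.
Qed.

Lemma norm_pos_part_sum (I : Type) (r : seq I) (f : I -> V) :
  `|pos_part (\sum_(i <- r) f i)| <= \sum_(i <- r) `|pos_part (f i)|.
Proof.
elim: r => [|i r IH]; first by rewrite !big_nil pos_part0 normr0.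
by rewrite !big_cons; apply: le_trans (norm_pos_partD _ _) _; rewrite lerD2l.
Qed.

Lemma norm_le_pos_part z : `|z| <= `|pos_part z| + `|pos_part (- z)|.
Proof.
have z0 : le 0 (pos_part z + pos_part (- z)).
  by rewrite -[0]addr0; exact: le_add (pos_part_ge0 _) (pos_part_ge0 _).
apply: le_trans (ler_normD _ _); apply: (bl_norm hBL); rewrite (ge0_lmod z0).
apply: (bl_join_least hBL).
- by rewrite -{1}[z]addr0; exact: le_add (pos_part_ge z) (pos_part_ge0 _).
- by rewrite -{1}[- z]add0r; exact: le_add (pos_part_ge0 z) (pos_part_ge _).
Qed.

Lemma norm_sum_le_pos_part (I : Type) (r : seq I) (f : I -> V) :
  `|\sum_(i <- r) f i| <=
    \sum_(i <- r) `|pos_part (f i)| + \sum_(i <- r) `|pos_part (- f i)|.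
Proof.
apply: le_trans (norm_le_pos_part _) _; rewrite -sumrN.
by apply: lerD; exact: norm_pos_part_sum.
Qed.

Lemma convex_incr_le {T : V -> V} a v (h : R) : convex_op le T -> 0 <= h <= 1 ->
  le (T (a + h *: v) - T a) (h *: (T (a + v) - T a)).
Proof.
move=> cT h01; have := cT (a + v) a h h01.
have -> : h *: (a + v) + (1 - h) *: a = a + h *: v.
  by rewrite scalerDr scalerBl scale1r addrC addrA subrK addrC.
have -> : h *: T (a + v) + (1 - h) *: T a = T a + h *: (T (a + v) - T a).
  by rewrite scalerDr scalerBl scale1r scalerN addrCA.
exact: le_subl.
Qed.

Lemma convex_incr_ge {T : V -> V} a v (h : R) : convex_op le T -> 0 <= h ->
  le (h *: (T a - T (a - v))) (T (a + h *: v) - T a).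
Proof.
move=> cT h0; have h1 : 0 < 1 + h by rewrite ltr_pwDl.
pose l := (1 + h)^-1.
have l01 : 0 <= l <= 1 by rewrite invr_ge0 (ltW h1) /= invf_le1 // lerDl.
have lh : 1 - l = h * l by rewrite /l; field; rewrite lt0r_neq0.
have hl : (1 + h) * l = 1 by rewrite mulfV // lt0r_neq0.
(* [a] is the convex combination of [a + h v] and [a - v] with weights [1 : h]. *)
have := cT (a + h *: v) (a - v) l l01.
have -> : l *: (a + h *: v) + (1 - l) *: (a - v) = a.
  rewrite lh mulrC -scalerA -scalerDr scalerBr addrACA subrr addr0.
  by rewrite -{1}[a]scale1r -scalerDl scalerA mulrC hl scale1r.
move/(bl_scale hBL (ltW h1)); rewrite scalerDr !scalerA hl lh mulrCA hl mulr1.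
by rewrite scale1r scalerDl scale1r scalerBr => /le_add_sub.
Qed.

Lemma convex_midpoint {T : V -> V} a b : convex_op le T ->
  le (T (2^-1 *: (a + b))) (2^-1 *: (T a + T b)).
Proof.
have half : (1 - 2^-1 : R) = 2^-1 by field.
have half01 : 0 <= (2^-1 : R) <= 1.
  by rewrite invr_ge0 ler0n invf_le1 ?ltr0n // ler1n.
by move=> /(_ a b _ half01); rewrite half -!scalerDr.
Qed.

Lemma norm_pos_part_convex_mid {T : V -> V} a b : convex_op le T ->
  `|pos_part (T (2^-1 *: (a + b)))| <= `|T a| + `|T b|.
Proof.
move=> /(convex_midpoint a b)/norm_pos_part_le_norm mid; apply: le_trans mid _.
rewrite normrZ ger0_norm ?invr_ge0 ?ler0n // ler_pdivrMl ?ltr0n //.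
by apply: le_trans (ler_normD _ _) _; rewrite ler_peMl ?ler1n ?addr_ge0.
Qed.

Lemma norm_pos_part_convex_opp {T : V -> V} p w : convex_op le T ->
  `|pos_part (- T w)| <= `|pos_part (T (p *+ 2 - w))| + 2 * `|T p|.
Proof.
move=> /(convex_midpoint w (p *+ 2 - w)).
have -> : 2^-1 *: (w + (p *+ 2 - w)) = p.
  rewrite subrKC -[p *+ 2]scaler_nat scalerA.
  by rewrite mulVf ?pnatr_eq0 // scale1r.
move/(bl_scale hBL (ler0n R 2)); rewrite scalerA mulfV ?pnatr_eq0 // scale1r.
rewrite addrC => /le_oppr/norm_pos_part_le_add opp; apply: le_trans opp _.
by rewrite normrN normrZ ger0_norm ?ler0n.
Qed.

Lemma convex_pos_part_lipschitz {T : V -> V} {p r M a b} :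
  convex_op le T -> 0 < r -> (forall z, `|z - p| <= 2 * r -> `|T z| <= M) ->
  `|a - p| <= r -> `|b - p| <= r ->
  `|pos_part (T a - T b)| <= 2 * M / r * `|a - b|.
Proof.
move=> cT r0 TM ap bp.
have [->|ab] := eqVneq a b; first by rewrite !subrr pos_part0 normr0 mulr0.
set d := `|a - b|.
have d0 : 0 < d by rewrite normr_gt0 subr_eq0.
have rd0 : 0 < r + d by rewrite addr_gt0.
(* [a] divides the segment from [b] to [c] in the ratio [d : r]. *)
pose c := a + (r / d) *: (a - b).
pose l : R := d / (r + d).
have l01 : 0 <= l <= 1.
  by rewrite /l divr_ge0 ?(ltW d0) ?(ltW rd0) //= ler_pdivrMr // mul1r lerDr ltW.
have cp : `|c - p| <= 2 * r.
  rewrite /c addrAC; apply: le_trans (ler_normD _ _) _.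
  rewrite normrZ gtr0_norm ?divr_gt0 // divfK ?gt_eqF //.
  by rewrite mulr2n mulrDl mul1r lerD2r.
have a_seg : b + l *: (c - b) = a.
  rewrite /c addrAC -{1}[a - b]scale1r -scalerDl scalerA.
  have -> : l * (1 + r / d) = 1 by rewrite /l; field; rewrite !gt_eqF.
  by rewrite scale1r subrKC.
move: (convex_incr_le b (c - b) _ cT l01); rewrite a_seg subrKC.
move=> /norm_pos_part_le_norm incr; apply: le_trans incr _.
rewrite normrZ ger0_norm ?(andP l01).1 //.
apply: (le_trans (y := l * (M + M))).
  apply: ler_wpM2l; first exact: (andP l01).1.
  apply: le_trans (ler_normB _ _) _; apply: lerD; apply: TM => //.
  by apply: le_trans bp _; rewrite mulr2n mulrDl mul1r lerDr ltW.
have M0 : 0 <= M.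
  by apply: le_trans (TM p _); rewrite // subrr normr0 mulr_ge0 // ltW.
have l_le : l <= d / r by rewrite ler_pM2l // lef_pV2 ?posrE // lerDl ltW.
apply: le_trans (ler_wpM2r (addr_ge0 M0 M0) l_le) _.
suff -> : d / r * (M + M) = 2 * M / r * d by [].
by field; rewrite gt_eqF.
Qed.

Lemma convex_lipschitz {T : V -> V} {p r M a b} :
  convex_op le T -> 0 < r -> (forall z, `|z - p| <= 2 * r -> `|T z| <= M) ->
  `|a - p| <= r -> `|b - p| <= r ->
  `|T a - T b| <= 4 * M / r * `|a - b|.
Proof.
move=> cT r0 TM ap bp; apply: le_trans (norm_le_pos_part _) _.
rewrite opprB; apply: le_trans (lerD (convex_pos_part_lipschitz cT r0 TM ap bp)
  (convex_pos_part_lipschitz cT r0 TM bp ap)) _.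
suff -> : 2 * M / r * `|a - b| + 2 * M / r * `|b - a| = 4 * M / r * `|a - b| by [].
by rewrite [`|b - a|]distrC; ring.
Qed.

Lemma convex_bounded_continuous {T : V -> V} :
  convex_op le T -> bounded_op T -> continuous T.
Proof.
move=> cT bT a.
have [M TM] := bT (`|a| + 2) (ltr_wpDl (normr_ge0 a) (ltr0n _ 2)).
have TMa z : `|z - a| <= 2 * 1 -> `|T z| <= M.
  rewrite mulr1 => za; apply: TM; rewrite -(subrK a z) addrC.
  by apply: le_trans (ler_normD _ _) _; rewrite lerD2l.
have M0 : 0 <= M by apply: le_trans (TMa a _); rewrite ?subrr ?normr0 ?mulr1.
have aa : `|a - a| <= 1 by rewrite subrr normr0.
have M41 : 0 < 4 * M + 1 by rewrite ltr_wpDl // mulr_ge0.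
apply/cvgrPdist_le => e e0.
have : \forall t \near a, `|a - t| <= minr 1 (e / (4 * M + 1)).
  apply: (cvgr_dist_le id a cvg_id).
  by rewrite lt_min ltr01 divr_gt0.
apply: filterS => t; rewrite le_min => /andP[t1 te].
apply: le_trans (convex_lipschitz cT ltr01 TMa aa _) _; first by rewrite distrC.
rewrite divr1; apply: (le_trans (y := (4 * M + 1) * `|a - t|)).
  by rewrite ler_wpM2r // lerDl.
by rewrite mulrC -ler_pdivlMr.
Qed.

Lemma convex_uniform_boundedness (T : nat -> V -> V) :
  (forall n, convex_op le (T n)) -> (forall n, continuous (T n)) ->
  (forall z, exists M N, forall n, (N <= n)%N -> `|T n z| <= M) ->
  forall p, exists r M N, 0 < r /\
    forall n z, (N <= n)%N -> `|z - p| <= r -> `|T n z| <= M.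
Proof.
move=> cT T_cont T_bnd p.
have [|x0 [r [k [r0 Tk]]]] :=
    eventually_bounded_on_ball (fun n z => `|T n z|) _ T_bnd.
  by move=> n z; apply: continuous_comp (T_cont n z) _; exact: norm_continuous.
pose b := p *+ 2 - x0.
have [Mb [Nb TMb]] := T_bnd b.
have [Mp [Np TMp]] := T_bnd p.
(* Near [p], every point is the midpoint of [b] and a point of the ball around [x0]. *)
have pos_bound n w : (maxn k Nb <= n)%N -> `|w - p| <= r / 4 ->
    `|pos_part (T n w)| <= k%:R + Mb.
  rewrite geq_max => /andP[kn Nbn] wp.
  have -> : w = 2^-1 *: ((x0 + (w - p) *+ 2) + b).
    rewrite addrAC subrKC addrC -mulrnDl subrK -[w *+ 2]scaler_nat scalerA.
    by rewrite mulVf ?pnatr_eq0 // scale1r.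
  apply: le_trans (norm_pos_part_convex_mid _ _ (cT n)) _.
  apply: lerD; last exact: TMb.
  apply: Tk => //; rewrite opprD addrA subrr add0r normrN normrMn.
  by apply: le_lt_trans (ler_wMn2r 2 wp) _; rewrite -mulr_natr; lra.
exists (r / 4), (2 * (k%:R + Mb) + 2 * Mp), (maxn (maxn k Nb) Np).
split=> [|n w]; first by rewrite divr_gt0.
rewrite geq_max => /andP[n1 n2] wp.
have w'p : `|(p *+ 2 - w) - p| <= r / 4 by rewrite mulr2n addrAC addrK distrC.
apply: le_trans (norm_le_pos_part _) _.
apply: le_trans (lerD (pos_bound n w n1 wp) (norm_pos_part_convex_opp p w (cT n))) _.
have := pos_bound n _ n1 w'p; have := TMp n n2; lra.
Qed.

Lemma norm_pos_part_convex_incr {T : V -> V} a w y (h : R) :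
  convex_op le T -> 0 <= h <= 1 ->
  `|pos_part (T (a + h *: w) - T a - h *: y)| <= h * `|T (a + w) - T a - y|.
Proof.
move=> cT h01; have [h0 _] := andP h01.
move: (convex_incr_le a w _ cT h01) => /(le_addr (- (h *: y))).
rewrite -scalerBr => /norm_pos_part_le_norm incr; apply: le_trans incr _.
by rewrite normrZ ger0_norm.
Qed.

Lemma norm_neg_part_convex_incr {T : V -> V} a w y (h : R) :
  convex_op le T -> 0 <= h ->
  `|pos_part (- (T (a + h *: w) - T a - h *: y))| <= h * `|T a - T (a - w) - y|.
Proof.
move=> cT h0; rewrite opprB.
move: (convex_incr_ge a w _ cT h0) => /le_opp/(le_addr (h *: y)).
rewrite addrC [X in le _ X]addrC -scalerN -scalerDr.
move=> /norm_pos_part_le_norm incr; apply: le_trans incr _.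
by rewrite normrZ ger0_norm // distrC.
Qed.

Section ConvexSemigroup.
Context {S : R -> V -> V}.
Hypothesis hS : convex_C0_semigroup le S.

Lemma semigroup_convex {t} : 0 <= t -> convex_op le (S t).
Proof. by case: hS => S_cb _ _ _ /S_cb[]. Qed.

Lemma semigroup_continuous {t} : 0 <= t -> continuous (S t).
Proof.
by case: hS => S_cb _ _ _ /S_cb[S_c S_b]; exact: convex_bounded_continuous.
Qed.

Lemma semigroup_near0 z {e : R} : 0 < e ->
  exists2 d : R, 0 < d & forall s, 0 <= s < d -> `|S s z - z| <= e.
Proof.
case: hS => _ S0 _ S_cont e0.
have /cvgrPdist_le /(_ e e0) [d /= d0 Sd] := S_cont z.
exists d => // s; rewrite le_eqVlt => /andP[/predU1P[<- _|s0 sd]].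
  by rewrite S0 subrr normr0 ltW.
by rewrite distrC; apply: Sd; rewrite //= sub0r normrN gtr0_norm.
Qed.

Lemma semigroup_locally_bounded p : exists t0 r M, [/\ 0 < t0, 0 < r &
  forall s z, 0 <= s <= t0 -> `|z - p| <= r -> `|S s z| <= M].
Proof.
apply: contrapT => unbounded.
have bad n : exists sz : R * V, [/\ 0 <= sz.1 <= n.+1%:R^-1,
    `|sz.2 - p| <= n.+1%:R^-1 & n%:R < `|S sz.1 sz.2|].
  apply: contrapT => bounded; apply: unbounded.
  exists n.+1%:R^-1, n.+1%:R^-1, n%:R; split=> // s z s01 zp.
  by rewrite leNgt; apply/negP => Sz; apply: bounded; exists (s, z).
have [sz /all_and3[s01 zp Sz]] := choice bad.
have s0 n : 0 <= (sz n).1 by case/andP: (s01 n).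
pose T n := S (sz n).1.
have T_bnd z : exists M N, forall n, (N <= n)%N -> `|T n z| <= M.
  have [d d0 Sd] := semigroup_near0 z ltr01.
  have [N _ Nd] := near_infty_natSinv_lt (PosNum d0).
  exists (`|z| + 1), N => n Nn; rewrite -(subrK z (T n z)) addrC.
  apply: le_trans (ler_normD _ _) _; rewrite lerD2l; apply: Sd.
  by rewrite s0 /=; apply: le_lt_trans (Nd n Nn); case/andP: (s01 n).
have [r [M [N [r0 TM]]]] := convex_uniform_boundedness T
  (fun n => semigroup_convex (s0 n)) (fun n => semigroup_continuous (s0 n)) T_bnd p.
near \oo => n.
have : `|T n (sz n).2| <= M.
  apply: TM; first by near: n; exists N.
  apply: le_trans (zp n) _; apply: ltW; near: n.
  by have [N' _ N'r] := near_infty_natSinv_lt (PosNum r0); exists N'.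
rewrite leNgt => /negP; apply; apply: lt_trans (Sz n); near: n.
exact: nbhs_infty_gtr.
Unshelve. all: by end_near.
Qed.

Definition stays_close (d e : R) (q : V) : Prop :=
  forall s z, 0 <= s < d -> `|z - q| < d -> `|S s z - q| <= e.

Lemma stays_closeW {d e q} d' : stays_close d e q -> d' <= d -> stays_close d' e q.
Proof.
move=> close d'd s z /andP[s0 sd'] zq.
by apply: close; [rewrite s0 (lt_le_trans sd') | exact: lt_le_trans d'd].
Qed.

Lemma semigroup_stays_close q {e : R} : 0 < e ->
  exists2 d : R, 0 < d & stays_close d e q.
Proof.
move=> e0; have [t0 [r [M [t00 r0 SM]]]] := semigroup_locally_bounded q.
have e2 : 0 < e / 2 by rewrite divr_gt0.
have [d1 d10 Sd1] := semigroup_near0 q e2.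
have M0 : 0 <= M.
  apply: le_trans (normr_ge0 (S 0 q)) (SM 0 q _ _); first by rewrite lexx ltW.
  by rewrite subrr normr0 ltW.
have r2 : 0 < r / 2 by rewrite divr_gt0.
pose L := 4 * M / (r / 2).
have L1 : 0 < L + 1 by rewrite ltr_wpDl // divr_ge0 ?mulr_ge0 // ltW.
exists (minr (minr t0 d1) (minr (r / 2) (e / 2 / (L + 1)))).
  by rewrite !lt_min t00 d10 r2 !divr_gt0.
move=> s z; rewrite !lt_min => /andP[s0 /andP[/andP[st0 sd1] _]].
case/and3P=> _ zr ze.
have SM' w : `|w - q| <= 2 * (r / 2) -> `|S s w| <= M.
  by rewrite mulrC divfK ?pnatr_eq0 //; apply: SM; rewrite s0 ltW.
have qq : `|q - q| <= r / 2 by rewrite subrr normr0 ltW.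
have Lip := convex_lipschitz (semigroup_convex s0) r2 SM' (ltW zr) qq.
rewrite -(subrK (S s q) (S s z)) -addrA.
apply: le_trans (ler_normD _ _) _; rewrite [e]splitr; apply: lerD; last first.
  by apply: Sd1; rewrite s0.
apply: le_trans Lip _; apply: (le_trans (y := (L + 1) * `|z - q|)).
  by rewrite ler_wpM2r // lerDl.
by rewrite mulrC -ler_pdivlMr // ltW.
Qed.

Lemma semigroup_orbit_estimate (u w y : V) (h e : R) (m : nat) :
  0 < h <= 1 -> S h u = u + h *: w ->
  (forall k, (k < m)%N ->
     `|S (k%:R * h) (u + w) - S (k%:R * h) u - y| <= e /\
     `|S (k%:R * h) u - S (k%:R * h) (u - w) - y| <= e) ->
  `|S (m%:R * h) u - u - (m%:R * h) *: y| <= m%:R * h * (2 * e).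
Proof.
move=> /andP[h0 h1] Shu Se; have h01 : 0 <= h <= 1 by rewrite (ltW h0) h1.
case: hS => _ S0 S_add _.
have kh0 k : 0 <= k%:R * h := mulr_ge0 (ler0n R k) (ltW h0).
pose F k := S (k%:R * h) u.
have F_succ k : F k.+1 = S (k%:R * h) (u + h *: w).
  by rewrite /F -Shu -S_add ?kh0 ?(ltW h0) // mulrSr mulrDl mul1r.
have -> : S (m%:R * h) u - u - (m%:R * h) *: y =
    \sum_(k < m) (F k.+1 - F k - h *: y).
  rewrite sumrB sumr_const card_ord scalerMnl -[h *+ m]mulr_natl.
  rewrite -(big_mkord xpredT (fun k => F k.+1 - F k)) telescope_sumr //.
  by rewrite /F mul0r S0.
have -> : m%:R * h * (2 * e) = \sum_(k < m) (h * e) + \sum_(k < m) (h * e).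
  by rewrite sumr_const card_ord -mulr2n -mulrnA -mulr_natl; ring.
apply: le_trans (norm_sum_le_pos_part _ _ _) _.
apply: lerD; apply: ler_sum => k _; rewrite F_succ /F;
  have [Se1 Se2] := Se k (ltn_ord k); have Sk := semigroup_convex (kh0 k).
- apply: le_trans (norm_pos_part_convex_incr _ _ _ _ Sk h01) _.
  by apply: ler_wpM2l; [exact: ltW | exact: Se1].
- apply: le_trans (norm_neg_part_convex_incr _ _ _ _ Sk (ltW h0)) _.
  by apply: ler_wpM2l; [exact: ltW | exact: Se2].
Qed.

Lemma semigroup_orbit_approx (x y u : V) (d e t : R) :
  stays_close d e (x + y) -> stays_close d e x -> stays_close d e (x - y) ->
  0 < t < d -> gen_domain S u ->
  `|u - x| < d / 2 -> `|generator S u - y| < d / 2 ->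
  `|S t u - u - t *: y| <= t * (4 * e).
Proof.
move=> close_xy close_x close_x_y /andP[t0 td] uD ux Auy.
have Au_lim : (fun h => h^-1 *: (S h u - u)) @ 0^'+ --> generator S u := uD.
have rho0 : 0 < d / 2 - `|generator S u - y| by rewrite subr_gt0.
have /cvgrPdist_lt /(_ _ rho0) [dl /= dl0 Au_close] := Au_lim.
have [m [m0 tm]] : exists m : nat, (0 < m)%N /\ t / m%:R < minr dl 1.
  have dl1 : 0 < minr dl 1 by rewrite lt_min dl0 ltr01.
  exists (truncn (t / minr dl 1)).+1; split => //.
  rewrite ltr_pdivrMr ?ltr0n // mulrC -ltr_pdivrMr //; exact: truncnS_gt.
pose h := t / m%:R.
have h0 : 0 < h by rewrite divr_gt0 ?ltr0n.
have [hdl h1] : h < dl /\ h < 1 by move: tm; rewrite lt_min => /andP.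
pose w := h^-1 *: (S h u - u).
have Shu : S h u = u + h *: w by rewrite scalerA mulfV ?gt_eqF // scale1r subrKC.
have wy : `|w - y| < d / 2.
  rewrite -(subrK (generator S u) w) -addrA; apply: le_lt_trans (ler_normD _ _) _.
  rewrite -ltrBrDr distrC; apply: Au_close => //=.
  by rewrite sub0r normrN gtr0_norm.
have uwd (v z : V) : `|u - x| < d / 2 -> `|v - z| < d / 2 -> `|u + v - (x + z)| < d.
  move=> uxd vzd; rewrite opprD addrACA; apply: le_lt_trans (ler_normD _ _) _.
  by rewrite [d]splitr ltrD.
have mh : m%:R * h = t by rewrite mulrC divfK // pnatr_eq0 -lt0n.
rewrite -mh; apply: le_trans (semigroup_orbit_estimate u w y h (2 * e) m _ Shu _) _.
- by rewrite h0 ltW.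
- move=> k km; have s_d : 0 <= k%:R * h < d.
    rewrite mulr_ge0 ?(ltW h0) //=; apply: le_lt_trans td.
    by rewrite -mh ler_wpM2r ?(ltW h0) // ler_nat ltnW.
  have x_close : `|S (k%:R * h) u - x| <= e.
    by apply: (close_x _ _ s_d); move: ux; have := lt_trans t0 td; lra.
  have two_e : 2 * e = e + e by lra.
  split; rewrite two_e.
  + apply: le_trans (norm_subB_le _ _ x y) _; apply: lerD => //.
    exact: (close_xy _ _ s_d (uwd _ _ ux wy)).
  + have := norm_subB_le (S (k%:R * h) u) (S (k%:R * h) (u - w)) (x - y) y.
    rewrite subrK => /le_trans; apply; apply: lerD => //.
    apply: (close_x_y _ _ s_d (uwd (- w) (- y) ux _)).
    by rewrite -opprD normrN.
- by rewrite mh; lra.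
Qed.

Lemma generator_closed {u : nat -> V} {x y : V} :
  (forall n, gen_domain S (u n)) -> u @ \oo --> x ->
  (fun n => generator S (u n)) @ \oo --> y ->
  h^-1 *: (S h x - x) @[h --> 0^'+] --> y.
Proof.
move=> uD ux Auy; apply/cvgrPdist_le => e e0.
have e4 : 0 < e / 4 by rewrite divr_gt0.
have [d1 d10 close_xy] := semigroup_stays_close (x + y) e4.
have [d2 d20 close_x] := semigroup_stays_close x e4.
have [d3 d30 close_x_y] := semigroup_stays_close (x - y) e4.
pose d := minr d1 (minr d2 d3).
have d0 : 0 < d by rewrite !lt_min d10 d20 d30.
have d2_0 : 0 < d / 2 by rewrite divr_gt0.
near=> t.
have t0 : 0 < t by near: t; exact: nbhs_right_gt.
have orbit_x : `|S t x - x - t *: y| <= t * e.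
  have Stu : `|S t (u n) - u n - t *: y| @[n --> \oo] --> `|S t x - x - t *: y|.
    apply: cvg_norm; apply: cvgB; last exact: cvg_cst.
    apply: cvgB; last exact: ux.
    exact: continuous_cvg (semigroup_continuous (ltW t0) x) ux.
  apply: (closed_cvg _ (@closed_le R (t * e)) _ _ Stu); near=> n.
  have -> : e = 4 * (e / 4) by rewrite mulrC divfK ?pnatr_eq0.
  apply: (semigroup_orbit_approx x y (u n) d (e / 4) t _ _ _ _ (uD n)).
  - by apply: (stays_closeW d close_xy); rewrite /d ge_min lexx.
  - by apply: (stays_closeW d close_x); rewrite /d !ge_min lexx orbT.
  - by apply: (stays_closeW d close_x_y); rewrite /d !ge_min lexx !orbT.
  - by rewrite t0; near: t; exact: nbhs_right_lt.
  - by rewrite distrC; near: n; exact: cvgr_dist_lt.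
  - by rewrite distrC; near: n; exact: cvgr_dist_lt.
have -> : y - t^-1 *: (S t x - x) = - (t^-1 *: (S t x - x - t *: y)).
  by rewrite [in RHS]scalerBr scalerA mulVf ?gt_eqF // scale1r opprB.
by rewrite normrN normrZ gtr0_norm ?invr_gt0 // mulrC ler_pdivrMr // mulrC.
Unshelve. all: by end_near.
Qed.

End ConvexSemigroup.

End BanachLattice.

Theorem proposition3p4 (R : realType) (V : completeNormedModType R)
  (le : V -> V -> Prop) (join : V -> V -> V) (S : R -> V -> V)
  (hBL : BanachLattice le join) (hOC : order_continuous_norm le)
  (hS : convex_C0_semigroup le S)
  (u : nat -> V) (x y : V) :
  (forall n, gen_domain S (u n)) ->
  u @ \oo --> x ->
  (fun n => generator S (u n)) @ \oo --> y ->
  gen_domain S x /\ generator S x = y.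
Proof.
move=> uD ux Auy; have Ax := generator_closed hBL hS uD ux Auy.
by split; [apply/cvg_ex; exists y | exact: cvg_lim].
Qed.
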